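(* Consider a Moksha-Patam board with a chute-barrier of $\lambda\ge 6$ chutes whose entrances are the cells $M+1,M+2,\dots,M+\lambda$. Set $m_1=M+1$ and let $m_2$ be the lowest exit among the chutes of this chute-barrier. Inductively, for $i\ge 2$, let $m_{i+1}$ be the lowest exit among the chutes whose entrance lies in $\{m_i+1,m_i+2,\dots,m_{i-1}-1\}$, or $m_{i+1}=m_i$ if there is no such chute or if this lowest exit exceeds $m_i$. Let $m=\min\{m_i: i\in\mathbb N\}$ and $C=\{m,m+1,\dots,M\}$. Then $C$ is not closed if and only if there is a ladder whose entrance $\ell$ lies in $C$ and whose exit $L$ satisfies $L>M+\lambda$.
   Context: A Moksha-Patam board consists of the cells $1,\dots,100$ together with a finite set of components; a component is an ordered pair $(a,b)$ of distinct cells, $a$ being its entrance and $b$ its exit; it is a ladder if $a<b$ and a chute if $a>b$. Conventions: distinct components have distinct entrances; no cell is both an entrance and an exit; cells $1$ and $100$ are neither entrances nor exits (components may share exits). The associated Markov chain has state space $\{1,\dots,100\}$ and transition probabilities defined as follows: $p_{100,100}=1$; for $i<100$ and each die value $d\in\{1,\dots,6\}$ (each with probability $1/6$), if $i+d>100$ the chain stays at $i$; otherwise, with $j=i+d$, the chain moves to $b$ if $j$ is the entrance of a component $(j,b)$ and to $j$ otherwise. A set $C$ of states is closed if $p_{ij}=0$ for all $i\in C$, $j\notin C$. A chute-barrier is a collection of six or more chutes whose entrances are consecutive cells. *)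

From mathcomp Require Import all_boot all_order all_algebra.
Set Implicit Arguments. Unset Strict Implicit. Unset Printing Implicit Defensive.
Import GRing.Theory Num.Theory.

(* A board is a finite list of components (a, b) = (entrance, exit). *)
Definition board := seq (nat * nat).

Definition is_cell (x : nat) : bool := (1 <= x <= 100)%N.
Definition entrances (s : board) : seq nat := map fst s.
Definition exits (s : board) : seq nat := map snd s.

Definition valid_board (s : board) : Prop :=
  [/\ forall c, c \in s -> [/\ is_cell c.1, is_cell c.2 & c.1 != c.2],
      uniq (entrances s),
      forall x, x \in entrances s -> x \notin exits s,
      (1 \notin entrances s) && (1 \notin exits s)
    & (100 \notin entrances s) && (100 \notin exits s)].

Definition is_ladder (c : nat * nat) : bool := (c.1 < c.2)%N.
Definition is_chute (c : nat * nat) : bool := (c.2 < c.1)%N.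

Definition dest (s : board) (j : nat) : nat :=
  if [seq c <- s | c.1 == j] is c :: _ then c.2 else j.

Definition target (s : board) (i d : nat) : nat :=
  if (100 < i + d)%N then i else dest s (i + d).

Definition trans (s : board) (i j : nat) : rat :=
  (if i == 100 then (if j == 100 then 1 else 0)
   else \sum_(1 <= d < 7) (6%:R)^-1 * (if target s i d == j then 1 else 0))%R.

Definition closed_set (s : board) (C : pred nat) : Prop :=
  forall i j, is_cell i -> is_cell j -> i \in C -> j \notin C -> trans s i j = 0%R.

Definition lowest_exit (s : board) (lo hi : nat) : option nat :=
  let xs := [seq c.2 | c <- s & [&& is_chute c, lo <= c.1 & c.1 <= hi]%N] in
  if xs is x :: _ then Some (foldr minn x xs) else None.

(* m_{i+1} from m_i (= a) and m_{i-1} (= b), for i >= 2. *)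
Definition next_m (s : board) (a b : nat) : nat :=
  match lowest_exit s a.+1 b.-1 with
  | Some e => if (a < e)%N then a else e
  | None => a
  end.

(* mpair s M lam k = (m_{k+1}, m_{k+2}). *)
Fixpoint mpair (s : board) (M lam : nat) (k : nat) : nat * nat :=
  match k with
  | 0 => (M.+1, odflt M.+1 (lowest_exit s M.+1 (M + lam)))
  | k'.+1 => let p := mpair s M lam k' in (p.2, next_m s p.2 p.1)
  end.

(* mseq s M lam k = m_{k+1} *)
Definition mseq (s : board) (M lam : nat) (k : nat) : nat := (mpair s M lam k).1.

From mathcomp Require Import all_boot all_order all_algebra.
From mathcomp Require Import zify.
From Stdlib Require Import Classical_Prop.
Set Implicit Arguments. Unset Strict Implicit. Unset Printing Implicit Defensive.
Import GRing.Theory Num.Theory.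

(* Every cell M+1, ..., M+lam of the barrier is a chute entrance, hence no
   exit, so every exit up to M+lam is at most M. By induction along the
   sequence, every chute entering (m_{k+1}, M+lam] lands at or above m_{k+2};
   as the sequence is eventually constant equal to m, every chute entering
   (m, M+lam] lands in C, and m, being an exit, is no entrance. From a cell of
   C a roll of at most 6 <= lam lands in (m, M+lam], where a chute lands in C
   and a ladder either lands in C or jumps past the barrier. Conversely, for
   such a ladder (l, L) we have l > m, and the roll 1 from l - 1 in C carries
   the token to L outside C. *)

Lemma foldr_minn_le x xs y : y \in xs -> (foldr minn x xs <= y)%N.
Proof.
elim: xs => [|z t IH] //=; rewrite inE => /orP[/eqP->|yt].
  exact: geq_minl.
exact: leq_trans (geq_minr _ _) (IH yt).
Qed.

Lemma foldr_minn_mem x xs : foldr minn x xs \in x :: xs.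
Proof.
elim: xs => [|z t IH] /=; first by rewrite inE.
rewrite {1}/minn; case: ifP => _; first by rewrite !inE eqxx orbT.
by move: IH; rewrite !inE => /orP[->|->] //; rewrite !orbT.
Qed.

Lemma uniq_fst_eq (T U : eqType) (s : seq (T * U)) k x y :
  uniq (map fst s) -> (k, x) \in s -> (k, y) \in s -> x = y.
Proof.
elim: s => [|c t IH] //= /andP[nc ut].
rewrite !inE => /orP[/eqP ex|xt] /orP[/eqP ey|yt].
- by rewrite -ex in ey; case: ey.
- by case/negP: nc; rewrite -ex; apply/mapP; exists (k, y).
- by case/negP: nc; rewrite -ey; apply/mapP; exists (k, x).
- exact: IH.
Qed.

Section LowestExit.

Variables (s : board) (lo hi : nat).

Let window_exits := [seq c.2 | c <- s & [&& is_chute c, lo <= c.1 & c.1 <= hi]%N].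

Lemma lowest_exit_le c : c \in s -> is_chute c -> (lo <= c.1 <= hi)%N ->
  exists2 e, lowest_exit s lo hi = Some e & (e <= c.2)%N.
Proof.
move=> cs ch r; rewrite /lowest_exit -/window_exits.
have : c.2 \in window_exits by apply: map_f; rewrite mem_filter ch r cs.
case: window_exits => [|x t] // cx.
by exists (foldr minn x (x :: t)); last exact: foldr_minn_le.
Qed.

Lemma lowest_exit_exits e : lowest_exit s lo hi = Some e -> e \in exits s.
Proof.
rewrite /lowest_exit -/window_exits.
have sub : {subset window_exits <= exits s}.
  by move=> y /mapP[c]; rewrite mem_filter => /andP[_ cs] ->; apply: map_f.
case: window_exits sub => [|x t] // sub [<-]; apply: sub.
by move: (foldr_minn_mem x (x :: t)); rewrite !inE orbA orbb.
Qed.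

End LowestExit.

Lemma next_m_le s a b : (next_m s a b <= a)%N.
Proof.
rewrite /next_m; case: lowest_exit => [e|] //.
by case: ifP => // /negbT; rewrite -leqNgt.
Qed.

Lemma next_m_le_chute s a b j c : (j, c) \in s -> (c < j)%N -> (a < j <= b.-1)%N ->
  (next_m s a b <= c)%N.
Proof.
move=> js cj r; have [e E ec] := lowest_exit_le js cj r.
by rewrite /next_m E; case: ifP => // ae; apply: ltnW (leq_trans ae ec).
Qed.

Lemma next_m_exits s a b : next_m s a b = a \/ next_m s a b \in exits s.
Proof.
rewrite /next_m; case E: lowest_exit => [e|]; last by left.
by case: ifP => _; [left | right; apply: lowest_exit_exits E].
Qed.

Lemma dest_cases s j : (j \notin entrances s /\ dest s j = j) \/ (j, dest s j) \in s.
Proof.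
rewrite /dest; have sub : {subset [seq c <- s | c.1 == j] <= s}.
  by move=> c; rewrite mem_filter => /andP[].
have : all (fun c => c.1 == j) [seq c <- s | c.1 == j] by apply: filter_all.
case E: [seq c <- s | c.1 == j] sub => [|c t] sub.
  left; split => //; apply/negP => /mapP[c cs cj].
  have : c \in [seq c <- s | c.1 == j] by rewrite mem_filter cs cj eqxx.
  by rewrite E.
move=> /= /andP[/eqP cj _]; right.
by have := sub c; rewrite inE eqxx -cj => /(_ isT); case: c {E sub cj}.
Qed.

Lemma dest_eq s j x : uniq (entrances s) -> (j, x) \in s -> dest s j = x.
Proof.
move=> u js; case: (dest_cases s j) => [[nj _]|h]; last exact: uniq_fst_eq u h js.
by case/negP: nj; apply/mapP; exists (j, x).
Qed.

Lemma target_dest s i d : (i + d <= 100)%N -> target s i d = dest s (i + d).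
Proof. by rewrite /target leqNgt => /negbTE->. Qed.

Lemma trans_eq0 s i j : i != 100 ->
  (forall d, (1 <= d < 7)%N -> target s i d != j) -> trans s i j = 0%R.
Proof.
move=> i100 miss; rewrite /trans (negbTE i100) big_nat big1 // => d /miss/negbTE->.
exact: mulr0.
Qed.

Lemma trans_neq0 s i j d : i != 100 -> (1 <= d < 7)%N -> target s i d = j ->
  trans s i j != 0%R.
Proof.
move=> i100 d7 tj; rewrite /trans (negbTE i100).
rewrite (bigD1_seq d) ?mem_index_iota ?iota_uniq //= tj eqxx mulr1.
apply: lt0r_neq0; rewrite ltr_wpDr ?invr_gt0 ?ltr0n //.
by apply: sumr_ge0 => e _; rewrite mulr_ge0 ?invr_ge0 ?ler0n //; case: ifP.
Qed.

Lemma exit_notin_entrances s b : valid_board s -> b \in exits s -> b \notin entrances s.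
Proof. by case=> _ _ ent_exit _ _ be; apply: contraTN be => /ent_exit. Qed.

Definition chute_barrier (s : board) (M lam : nat) :=
  forall k, (M.+1 <= k <= M + lam)%N -> exists b, (k, b) \in s /\ (b < k)%N.

Section Barrier.

Variables (s : board) (M lam : nat).
Hypotheses (Hs : valid_board s) (Hlam : (0 < lam)%N) (Hbar : chute_barrier s M lam).

Local Notation m_ := (mseq s M lam).

Lemma mseqSS k : m_ k.+2 = next_m s (m_ k.+1) (m_ k).
Proof. by []. Qed.

Lemma barrier_entrance k : (M < k <= M + lam)%N -> k \in entrances s.
Proof. by move=> /Hbar[b [kb _]]; apply/mapP; exists (k, b). Qed.

Lemma barrier_exit_le b : b \in exits s -> (b <= M + lam)%N -> (b <= M)%N.
Proof.
move=> /(exit_notin_entrances Hs) bnot bl; rewrite leqNgt.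
by apply: contraNN bnot => Mb; apply: barrier_entrance; rewrite Mb.
Qed.

Lemma barrier_top_lt100 : (M + lam < 100)%N.
Proof.
have [|b [bs _]] := @Hbar (M + lam); first by apply/andP; split => //; lia.
case: Hs => /(_ _ bs)[/andP[_ top] _ _] _ _ _ /andP[n100 _].
have : M + lam != 100.
  by apply: contraNneq n100 => <-; apply/mapP; exists (M + lam, b).
by move: top => /=; lia.
Qed.

Lemma mseq1_spec : lowest_exit s M.+1 (M + lam) = Some (m_ 1) /\ (m_ 1 <= M)%N.
Proof.
have [|b [bs bl]] := @Hbar M.+1; first by apply/andP; split => //; lia.
have [|e E eb] := lowest_exit_le (lo := M.+1) (hi := M + lam) bs bl.
  by rewrite /= leqnn; lia.
by rewrite /mseq /= E; split => //; move: eb bl => /=; lia.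
Qed.

Lemma mseq_exits k : m_ k.+1 \in exits s.
Proof.
elim: k => [|k IH]; first exact: lowest_exit_exits (proj1 mseq1_spec).
by rewrite mseqSS; case: (next_m_exits s (m_ k.+1) (m_ k)) => [->|].
Qed.

Lemma mseq_nonincr k : (m_ k.+1 <= m_ k)%N.
Proof. by case: k => [|k]; [apply: leq_trans (proj2 mseq1_spec) _ | apply: next_m_le]. Qed.

(* m_{k+2} is the lowest exit over the window (m_{k+1}, m_k); chutes entering
   (m_k, M+lam] are handled by induction, and m_{k+1}, an exit, is no entrance. *)
Lemma mseq_le_chute k j b : (j, b) \in s -> (b < j)%N ->
  (m_ k.+1 < j <= M + lam)%N -> (m_ k.+2 <= b)%N.
Proof.
elim: k j b => [|k IH] j b js bj /andP[lj jh]; rewrite mseqSS.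
  have [jM | Mj] := leqP j M; first by apply: next_m_le_chute js bj _; rewrite lj.
  have [|e] := lowest_exit_le (lo := M.+1) (hi := M + lam) js bj; first by rewrite /= Mj.
  by rewrite (proj1 mseq1_spec) => -[<-]; apply: leq_trans (next_m_le _ _ _).
case: (ltngtP (m_ k.+1) j) => h.
- by apply: leq_trans (next_m_le _ _ _) (IH _ _ js bj _); apply/andP.
- by apply: next_m_le_chute js bj _; apply/andP; split => //; lia.
- have := exit_notin_entrances Hs (mseq_exits k); rewrite h.
  by move=> /negP[]; apply/mapP; exists (j, b).
Qed.

Section Limit.

Variable m : nat.
Hypotheses (Hm_attained : exists i, m_ i = m) (Hm_min : forall i, (m <= m_ i)%N).

Lemma limit_le : (m <= M)%N.
Proof. exact: leq_trans (Hm_min 1) (proj2 mseq1_spec). Qed.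

Lemma limit_exits : m \in exits s.
Proof.
have [[|i] mi] := Hm_attained; last by rewrite -mi mseq_exits.
by have := limit_le; rewrite -mi /mseq /=; lia.
Qed.

Lemma limit_gt0 : (0 < m)%N.
Proof. by have /mapP[c cs ->] := limit_exits; case: Hs => /(_ _ cs)[_ /andP[]]. Qed.

Lemma limit_notin_entrances : m \notin entrances s.
Proof. exact: exit_notin_entrances Hs limit_exits. Qed.

Lemma limit_le_chute j b : (j, b) \in s -> (b < j)%N -> (m < j <= M + lam)%N ->
  (m <= b)%N.
Proof.
have [i mi] := Hm_attained; move=> js bj r.
have mi1 : m_ i.+1 = m by apply/eqP; rewrite eqn_leq Hm_min -mi mseq_nonincr.
by apply: leq_trans (Hm_min i.+2) (mseq_le_chute js bj _); rewrite mi1.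
Qed.

Lemma dest_limit_window k :
  (forall l L, (l, L) \in s -> (l < L)%N -> (m <= l <= M)%N -> (L <= M + lam)%N) ->
  (m < k <= M + lam)%N -> (m <= dest s k <= M)%N.
Proof.
move=> no_escape kw; have /andP[mk kh] := kw.
have [[nk ->]|ks] := dest_cases s k.
  have [kM|Mk] := leqP k M; first by rewrite ltnW.
  by case/negP: nk; apply: barrier_entrance; rewrite Mk.
have Dex : dest s k \in exits s by apply/mapP; exists (k, dest s k).
case: (ltngtP (dest s k) k) => h.
- by rewrite (limit_le_chute ks) // barrier_exit_le //; lia.
- have kM : (k <= M)%N.
    rewrite leqNgt; apply/negP => Mk; have [|b [bs bk]] := @Hbar k; first lia.
    have uniq_ent : uniq (entrances s) by case: Hs.
    by move: h; rewrite (uniq_fst_eq uniq_ent ks bs); lia.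
  have DL := no_escape _ _ ks h (introT andP (conj (ltnW mk) kM)).
  by rewrite barrier_exit_le // andbT; lia.
- by case: Hs => /(_ _ ks)[_ _]; rewrite /= h eqxx.
Qed.

End Limit.

End Barrier.

Theorem mainTheorem8 (s : board) (M lam : nat) :
  valid_board s ->
  (6 <= lam)%N ->
  (forall k, (M.+1 <= k <= M + lam)%N -> exists b, (k, b) \in s /\ (b < k)%N) ->
  forall m : nat,
    (exists i, mseq s M lam i = m) ->
    (forall i, (m <= mseq s M lam i)%N) ->
    let C : pred nat := fun x => (m <= x <= M)%N in
    ~ closed_set s C <->
    exists l L, [/\ (l, L) \in s, (l < L)%N, C l & (M + lam < L)%N].
Proof.
move=> Hs lam_ge6 Hbar m Hatt Hmin C.
have Hlam : (0 < lam)%N by lia.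
have top := barrier_top_lt100 Hs Hlam Hbar.
have mM := limit_le Hlam Hbar Hmin.
split.
- move=> not_closed; apply: NNPP => no_escape; apply: not_closed => i j _ _ iC jC.
  have /andP[mi iM] : (m <= i <= M)%N := iC.
  apply: trans_eq0 => [|d /andP[d1 d7]]; first by apply/eqP; lia.
  apply: contraNneq jC => <-; rewrite target_dest; last by lia.
  apply: (dest_limit_window Hs Hlam Hbar Hatt Hmin) => [l L ls lL lC|]; last by lia.
  by rewrite leqNgt; apply/negP => HL; apply: no_escape; exists l, L.
- case=> l [L [ls lL lC HL]] closed.
  have /andP[ml lM] : (m <= l <= M)%N := lC.
  have lm : m != l.
    apply: contraNneq (limit_notin_entrances Hs Hlam Hbar Hatt Hmin) => ->.
    by apply/mapP; exists (l, L).
  have m_gt0 := limit_gt0 Hs Hlam Hbar Hatt Hmin.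
  have /andP[_ L100] : is_cell L by case: Hs => /(_ _ ls)[].
  have : trans s l.-1 L != 0%R.
    apply: (trans_neq0 (d := 1)) => //; first by apply/eqP; lia.
    rewrite target_dest; last by lia.
    rewrite (_ : l.-1 + 1 = l)%N; last by lia.
    by apply: dest_eq ls; case: Hs.
  by rewrite closed // /is_cell ?unfold_in /=; lia.
Qed.
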